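(* For the modular data of the quantum double of $S_3$, each of the trace three modular invariants $Z_{24},Z_{42},Z_{35},Z_{53},Z_{44},Z_{(55)},Z_{(44)}$ has, up to equivalence, exactly one matching nimrep.
   Context: Primaries $0,\dots,7$, all self-conjugate, with $S=\frac16\begin{pmatrix}1&1&2&2&2&2&3&3\\1&1&2&2&2&2&-3&-3\\2&2&4&-2&-2&-2&0&0\\2&2&-2&4&-2&-2&0&0\\2&2&-2&-2&-2&4&0&0\\2&2&-2&-2&4&-2&0&0\\3&-3&0&0&0&0&3&-3\\3&-3&0&0&0&0&-3&3\end{pmatrix}$, fusion coefficients $N_{\lambda\mu}^\nu=\sum_\rho S_{\lambda\rho}S_{\mu\rho}\overline{S_{\nu\rho}}/S_{0\rho}$. Matrices are written as $\sum Z_{\lambda\mu}\chi_\lambda\chi_\mu^*$, and $st^*$ for linear forms is the matrix of products of coefficients. With $s_2=\chi_0+\chi_1+2\chi_2$, $s_3=\chi_0+\chi_1+2\chi_3$, $s_4=\chi_0+\chi_2+\chi_6$, $s_5=\chi_0+\chi_3+\chi_6$: $Z_{ij}=s_is_j^*$. $Z_{(44)}=|\chi_0+\chi_2|^2+\chi_1\chi_6^*+\chi_2\chi_6^*+\chi_6\chi_1^*+\chi_6\chi_2^*+|\chi_7|^2$, $Z_{(55)}=|\chi_0+\chi_3|^2+\chi_1\chi_6^*+\chi_3\chi_6^*+\chi_6\chi_1^*+\chi_6\chi_3^*+|\chi_7|^2$. A nimrep of dimension $n$: non-negative integer $n\times n$ matrices $G_\lambda$ with $G_0=I$, $G_{\bar\lambda}=G_\lambda^t$,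 $G_\lambda G_\mu=\sum_\nu N_{\lambda\mu}^\nu G_\nu$; nimreps are equivalent if conjugate by a common permutation matrix. $\mathrm{Exp}(Z)$ is the multiset with $Z_{\mu\mu}$ copies of $\mu$. A nimrep matches $Z$ if $n=\mathrm{Tr}\,Z$ and the $G_\lambda$ are simultaneously unitarily diagonalisable with joint eigenvalues $(S_{\lambda\mu}/S_{0\mu})_\lambda$, $\mu$ running through $\mathrm{Exp}(Z)$ with multiplicity. *)

From HB Require Import structures.
From mathcomp Require Import all_boot all_order all_algebra all_fingroup all_field.
Set Implicit Arguments. Unset Strict Implicit. Unset Printing Implicit Defensive.
Import Order.TTheory GRing.Theory Num.Theory.
Local Open Scope ring_scope.

(* Integer entries of 6*S, rows/columns indexed by primaries 0..7. *)
Definition S6 : seq (seq int) :=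
  [:: [:: 1; 1; 2; 2; 2; 2; 3; 3];
      [:: 1; 1; 2; 2; 2; 2; -3; -3];
      [:: 2; 2; 4; -2; -2; -2; 0; 0];
      [:: 2; 2; -2; 4; -2; -2; 0; 0];
      [:: 2; 2; -2; -2; -2; 4; 0; 0];
      [:: 2; 2; -2; -2; 4; -2; 0; 0];
      [:: 3; -3; 0; 0; 0; 0; 3; -3];
      [:: 3; -3; 0; 0; 0; 0; -3; 3]]%Z.

Definition Smx : 'M[algC]_8 :=
  \matrix_(i < 8, j < 8) ((nth 0%Z (nth [::] S6 i) j)%:~R / 6%:R).

Definition p0 : 'I_8 := ord0.

Definition cnj (l : 'I_8) : 'I_8 := l.

Definition Nfus (l m n : 'I_8) : algC :=
  \sum_(r < 8) Smx l r * Smx m r * (Smx n r)^* / Smx p0 r.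

(* Linear forms sum_l c_l chi_l, as coefficient functions. *)
Definition chi (k : nat) : 'I_8 -> nat := fun a => (nat_of_ord a == k)%N : nat.
Definition faddn (s t : 'I_8 -> nat) : 'I_8 -> nat := fun a => (s a + t a)%N.
Definition fscale (c : nat) (s : 'I_8 -> nat) : 'I_8 -> nat := fun a => (c * s a)%N.

Definition outer (s t : 'I_8 -> nat) : 'M[nat]_8 := \matrix_(a, b) (s a * t b)%N.
Definition madd (A B : 'M[nat]_8) : 'M[nat]_8 := \matrix_(a, b) (A a b + B a b)%N.

Definition s2 := faddn (faddn (chi 0) (chi 1)) (fscale 2 (chi 2)).
Definition s3 := faddn (faddn (chi 0) (chi 1)) (fscale 2 (chi 3)).
Definition s4 := faddn (faddn (chi 0) (chi 2)) (chi 6).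
Definition s5 := faddn (faddn (chi 0) (chi 3)) (chi 6).

Definition Z24 := outer s2 s4.
Definition Z42 := outer s4 s2.
Definition Z35 := outer s3 s5.
Definition Z53 := outer s5 s3.
Definition Z44 := outer s4 s4.

Definition Zp44 : 'M[nat]_8 :=
  madd (outer (faddn (chi 0) (chi 2)) (faddn (chi 0) (chi 2)))
  (madd (outer (chi 1) (chi 6))
  (madd (outer (chi 2) (chi 6))
  (madd (outer (chi 6) (chi 1))
  (madd (outer (chi 6) (chi 2))
        (outer (chi 7) (chi 7)))))).

Definition Zp55 : 'M[nat]_8 :=
  madd (outer (faddn (chi 0) (chi 3)) (faddn (chi 0) (chi 3)))
  (madd (outer (chi 1) (chi 6))
  (madd (outer (chi 3) (chi 6))
  (madd (outer (chi 6) (chi 1))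
  (madd (outer (chi 6) (chi 3))
        (outer (chi 7) (chi 7)))))).

Definition toC n (A : 'M[nat]_n) : 'M[algC]_n := map_mx (fun k : nat => k%:R) A.

(* A nimrep of dimension n (non-negativity / integrality: entries in nat). *)
Definition nimrep n (G : 'I_8 -> 'M[nat]_n) : Prop :=
  [/\ G p0 = \matrix_(i, j) (i == j : nat),
      forall l, G (cnj l) = (G l)^T
    & forall l m, toC (G l) *m toC (G m) = \sum_(k < 8) Nfus l m k *: toC (G k)].

Definition nimrep_equiv n (G G' : 'I_8 -> 'M[nat]_n) : Prop :=
  exists s : 'S_n, forall l, G' l = col_perm s (row_perm s (G l)).

Definition mxtr8 (Z : 'M[nat]_8) : nat := (\sum_(m < 8) Z m m)%N.

(* G matches Z: n = Tr Z, and the G_l are simultaneously unitarily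
   diagonalisable with joint eigenvalues (S_{l mu}/S_{0 mu})_l, mu running
   through Exp(Z) with multiplicity (enumerated by mu : 'I_n -> 'I_8, where
   each m occurs exactly Z m m times). *)
Definition matches (Z : 'M[nat]_8) n (G : 'I_8 -> 'M[nat]_n) : Prop :=
  n = mxtr8 Z /\
  exists (mu : 'I_n -> 'I_8) (U : 'M[algC]_n),
    [/\ forall m, #|[pred i | mu i == m]| = Z m m,
        U *m (map_mx Num.conj U)^T = 1%:M
      & forall l, (map_mx Num.conj U)^T *m toC (G l) *m U
                  = diag_mx (\row_i (Smx l (mu i) / Smx p0 (mu i)))].

Definition unique_matching_nimrep (Z : 'M[nat]_8) : Prop :=
  (exists n (G : 'I_8 -> 'M[nat]_n), nimrep G /\ matches Z G) /\
  (forall n (G G' : 'I_8 -> 'M[nat]_n),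
      nimrep G -> matches Z G -> nimrep G' -> matches Z G' -> nimrep_equiv G G').

(* All seven invariants have trace 3 and only their diagonals matter, so a matching nimrep
   is a family of eight symmetric 3x3 non-negative integer matrices G_l, with G_0 = 1,
   satisfying the fusion rules, whose spectrum is prescribed:
   tr G_l^k = sum_mu Z_mu,mu (S_l,mu / S_0,mu)^k.  For k = 2 this bounds every entry by 4,
   so the G_l can be enumerated one primary at a time, pruning with the fusion rules; for
   each diagonal all surviving families are conjugate under a permutation of the three
   basis vectors.  One survivor is diagonalised by an explicit rational basis with
   orthogonal columns, which gives existence. *)

From mathcomp Require Import all_boot all_order all_algebra all_fingroup all_field.
From mathcomp Require Import ring.
Set Implicit Arguments. Unset Strict Implicit. Unset Printing Implicit Defensive.
Import Order.TTheory GRing.Theory Num.Theory.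
Local Open Scope ring_scope.

(* Unlike the locked [\sum], this sum evaluates under [vm_compute]. *)
Definition sum_iota (R : nmodType) n (f : nat -> R) : R :=
  foldr +%R 0 [seq f i | i <- iota 0 n].

Lemma sum_iotaE (R : nmodType) n (f : nat -> R) : sum_iota n f = \sum_(i < n) f i.
Proof. by rewrite /sum_iota foldrE big_map -(big_mkord xpredT) /index_iota subn0. Qed.

Lemma eq_sum_iota (R : nmodType) n (f f' : nat -> R) :
  (forall i, (i < n)%N -> f i = f' i) -> sum_iota n f = sum_iota n f'.
Proof. by move=> eq_f; rewrite !sum_iotaE; apply: eq_bigr => i _; apply: eq_f. Qed.

Lemma all_iotaP n (P : pred nat) : reflect (forall i, (i < n)%N -> P i) (all P (iota 0 n)).
Proof.
apply: (iffP allP) => H i; first by move=> lt_in; apply: H; rewrite mem_iota.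
by rewrite mem_iota => /andP[_ /H].
Qed.

Lemma all_iota_ord n (P : pred nat) (i : 'I_n) : all P (iota 0 n) -> P i.
Proof. by move/all_iotaP; apply. Qed.

Definition Srat (i j : nat) : rat := (nth 0%Z (nth [::] S6 i) j)%:~R / 6%:R.

Lemma Smx_rat (l r : 'I_8) : Smx l r = ratr (Srat l r).
Proof. by rewrite mxE fmorph_div rmorph_int rmorph_nat. Qed.

Definition fusion_table : seq (seq (seq nat)) := [::
  [:: [:: 1; 0; 0; 0; 0; 0; 0; 0]; [:: 0; 1; 0; 0; 0; 0; 0; 0];
      [:: 0; 0; 1; 0; 0; 0; 0; 0]; [:: 0; 0; 0; 1; 0; 0; 0; 0];
      [:: 0; 0; 0; 0; 1; 0; 0; 0]; [:: 0; 0; 0; 0; 0; 1; 0; 0];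
      [:: 0; 0; 0; 0; 0; 0; 1; 0]; [:: 0; 0; 0; 0; 0; 0; 0; 1]];
  [:: [:: 0; 1; 0; 0; 0; 0; 0; 0]; [:: 1; 0; 0; 0; 0; 0; 0; 0];
      [:: 0; 0; 1; 0; 0; 0; 0; 0]; [:: 0; 0; 0; 1; 0; 0; 0; 0];
      [:: 0; 0; 0; 0; 1; 0; 0; 0]; [:: 0; 0; 0; 0; 0; 1; 0; 0];
      [:: 0; 0; 0; 0; 0; 0; 0; 1]; [:: 0; 0; 0; 0; 0; 0; 1; 0]];
  [:: [:: 0; 0; 1; 0; 0; 0; 0; 0]; [:: 0; 0; 1; 0; 0; 0; 0; 0];
      [:: 1; 1; 1; 0; 0; 0; 0; 0]; [:: 0; 0; 0; 0; 1; 1; 0; 0];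
      [:: 0; 0; 0; 1; 0; 1; 0; 0]; [:: 0; 0; 0; 1; 1; 0; 0; 0];
      [:: 0; 0; 0; 0; 0; 0; 1; 1]; [:: 0; 0; 0; 0; 0; 0; 1; 1]];
  [:: [:: 0; 0; 0; 1; 0; 0; 0; 0]; [:: 0; 0; 0; 1; 0; 0; 0; 0];
      [:: 0; 0; 0; 0; 1; 1; 0; 0]; [:: 1; 1; 0; 1; 0; 0; 0; 0];
      [:: 0; 0; 1; 0; 0; 1; 0; 0]; [:: 0; 0; 1; 0; 1; 0; 0; 0];
      [:: 0; 0; 0; 0; 0; 0; 1; 1]; [:: 0; 0; 0; 0; 0; 0; 1; 1]];
  [:: [:: 0; 0; 0; 0; 1; 0; 0; 0]; [:: 0; 0; 0; 0; 1; 0; 0; 0];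
      [:: 0; 0; 0; 1; 0; 1; 0; 0]; [:: 0; 0; 1; 0; 0; 1; 0; 0];
      [:: 1; 1; 0; 0; 1; 0; 0; 0]; [:: 0; 0; 1; 1; 0; 0; 0; 0];
      [:: 0; 0; 0; 0; 0; 0; 1; 1]; [:: 0; 0; 0; 0; 0; 0; 1; 1]];
  [:: [:: 0; 0; 0; 0; 0; 1; 0; 0]; [:: 0; 0; 0; 0; 0; 1; 0; 0];
      [:: 0; 0; 0; 1; 1; 0; 0; 0]; [:: 0; 0; 1; 0; 1; 0; 0; 0];
      [:: 0; 0; 1; 1; 0; 0; 0; 0]; [:: 1; 1; 0; 0; 0; 1; 0; 0];
      [:: 0; 0; 0; 0; 0; 0; 1; 1]; [:: 0; 0; 0; 0; 0; 0; 1; 1]];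
  [:: [:: 0; 0; 0; 0; 0; 0; 1; 0]; [:: 0; 0; 0; 0; 0; 0; 0; 1];
      [:: 0; 0; 0; 0; 0; 0; 1; 1]; [:: 0; 0; 0; 0; 0; 0; 1; 1];
      [:: 0; 0; 0; 0; 0; 0; 1; 1]; [:: 0; 0; 0; 0; 0; 0; 1; 1];
      [:: 1; 0; 1; 1; 1; 1; 0; 0]; [:: 0; 1; 1; 1; 1; 1; 0; 0]];
  [:: [:: 0; 0; 0; 0; 0; 0; 0; 1]; [:: 0; 0; 0; 0; 0; 0; 1; 0];
      [:: 0; 0; 0; 0; 0; 0; 1; 1]; [:: 0; 0; 0; 0; 0; 0; 1; 1];
      [:: 0; 0; 0; 0; 0; 0; 1; 1]; [:: 0; 0; 0; 0; 0; 0; 1; 1];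
      [:: 0; 1; 1; 1; 1; 1; 0; 0]; [:: 1; 0; 1; 1; 1; 1; 0; 0]]]%N.

Definition fusion (l m k : nat) : nat := nth 0 (nth [::] (nth [::] fusion_table l) m) k.

Definition verlinde (l m k : nat) : rat :=
  sum_iota 8 (fun r => Srat l r * Srat m r * Srat k r / Srat 0 r).

Lemma verlinde_fusion :
  all (fun l => all (fun m => all (fun k => verlinde l m k == (fusion l m k)%:R)
    (iota 0 8)) (iota 0 8)) (iota 0 8).
Proof. by vm_compute. Qed.

Lemma Nfus_fusion (l m k : 'I_8) : Nfus l m k = (fusion l m k)%:R.
Proof.
rewrite -(rmorph_nat (ratr : rat -> algC)).
have /eqP <- := all_iota_ord k (all_iota_ord m (all_iota_ord l verlinde_fusion)).
rewrite /verlinde sum_iotaE rmorph_sum; apply: eq_bigr => r _.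
by rewrite !Smx_rat conj_Crat ?Crat_rat // !(rmorphM, fmorphV).
Qed.

Definition psi (l m : 'I_8) : algC := Smx l m / Smx p0 m.

Lemma sum_by_multiplicity n (mu : 'I_n -> 'I_8) (f : 'I_8 -> algC) :
  \sum_i f (mu i) = \sum_m #|[pred i | mu i == m]|%:R * f m.
Proof.
rewrite (partition_big mu xpredT) //=; apply: eq_bigr => m _.
by rewrite (eq_bigr (fun=> f m)) => [|i /eqP->]; rewrite ?sumr_const ?mulr_natl.
Qed.

Lemma mxtrace_exp_diagonalised n (A U V : 'M[algC]_n) (d : 'rV_n) k :
  U *m V = 1%:M -> V *m A *m U = diag_mx d -> \tr (A ^+ k) = \sum_i d 0 i ^+ k.
Proof.
move=> UV VAU; have VU : V *m U = 1%:M := mulmx1C UV.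
have A_D : A = U *m diag_mx d *m V by rewrite -VAU !mulmxA UV mul1mx -mulmxA UV mulmx1.
have A_exp : A ^+ k = U *m diag_mx (\row_i d 0 i ^+ k) *m V.
  elim: k => [|k IHk].
    rewrite expr0 (_ : diag_mx _ = 1%:M) ?mulmx1 ?UV //.
    by apply/matrixP => i j; rewrite !mxE expr0.
  rewrite exprS IHk -mulmxE {1}A_D !mulmxA -(mulmxA _ V U) VU mulmx1 -!mulmxA.
  rewrite (mulmxA (diag_mx d)) mulmx_diag.
  by congr (U *m (diag_mx _ *m V)); apply/rowP => i; rewrite !mxE exprS.
rewrite A_exp mxtrace_mulC mulmxA VU mul1mx mxtrace_diag.
by apply: eq_bigr => i _; rewrite mxE.
Qed.

Lemma matches_trace_exp Z n (G : 'I_8 -> 'M[nat]_n) l k : matches Z G ->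
  \tr (toC (G l) ^+ k) = \sum_m (Z m m)%:R * psi l m ^+ k.
Proof.
case=> _ [mu [U [mult_mu unitary_U diag_U]]].
rewrite (mxtrace_exp_diagonalised _ unitary_U (diag_U l)).
rewrite (eq_bigr (fun i => psi l (mu i) ^+ k)) => [|i _]; last by rewrite mxE.
rewrite (sum_by_multiplicity mu (fun m => psi l m ^+ k)).
by apply: eq_bigr => m _; rewrite mult_mu.
Qed.

Definition psirat (l m : nat) : rat := Srat l m / Srat 0 m.

Lemma psi_rat (l m : 'I_8) : psi l m = ratr (psirat l m).
Proof. by rewrite /psi !Smx_rat -fmorph_div. Qed.

Definition spectral_trace (mu : seq nat) k l : rat :=
  sum_iota 8 (fun m => (count_mem m mu)%:R * psirat l m ^+ k).

Lemma matches_trace_spectral (Z : 'M[nat]_8) mu n (G : 'I_8 -> 'M[nat]_n) (l : 'I_8) k :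
  (forall m : 'I_8, Z m m = count_mem (m : nat) mu) -> matches Z G ->
  \tr (toC (G l) ^+ k) = ratr (spectral_trace mu k l).
Proof.
move=> Z_mu /matches_trace_exp ->; rewrite /spectral_trace sum_iotaE rmorph_sum.
by apply: eq_bigr => m _; rewrite Z_mu psi_rat rmorphM rmorphXn rmorph_nat.
Qed.

Lemma nimrep_product n (G : 'I_8 -> 'M[nat]_n) l m i j : nimrep G ->
  \sum_k G l i k * G m k j = \sum_(c < 8) fusion l m c * G c i j.
Proof.
case=> _ _ /(_ l m)/matrixP/(_ i j); rewrite !mxE summxE => prod_lm.
apply/eqP; rewrite -(eqr_nat algC) !natr_sum; apply/eqP.
rewrite (eq_bigr (fun k => toC (G l) i k * toC (G m) k j)) => [|k _]; last first.
  by rewrite !mxE natrM.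
by rewrite prod_lm; apply: eq_bigr => c _; rewrite !mxE Nfus_fusion natrM.
Qed.

Lemma toC_trace n (A : 'M[nat]_n) : \tr (toC A) = (\sum_i A i i)%:R.
Proof. by rewrite natr_sum; apply: eq_bigr => i _; rewrite mxE. Qed.

Lemma toC_trace_sqr n (A : 'M[nat]_n) :
  \tr (toC A ^+ 2) = (\sum_i \sum_j A i j * A j i)%:R.
Proof.
rewrite expr2 -mulmxE natr_sum; apply: eq_bigr => i _.
by rewrite mxE natr_sum; apply: eq_bigr => j _; rewrite !mxE natrM.
Qed.

(* A partial table gives the upper triangle of G_l for the primaries l chosen so far. *)
Notation ptable := (seq (option (seq nat))).

Section Tables.
Local Open Scope nat_scope.

Definition entries (G : 'I_8 -> 'M[nat]_3) (l i j : nat) : nat :=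
  G (inord l) (inord i) (inord j).

Record admissible (T Q : nat -> nat) (g : nat -> nat -> nat -> nat) : Prop := {
  admissible_sym : forall l i j, l < 8 -> i < 3 -> j < 3 -> g l i j = g l j i;
  admissible_unit : forall i j, i < 3 -> j < 3 -> g 0 i j = (i == j);
  admissible_fusion : forall l m i j, l < 8 -> m < 8 -> i < 3 -> j < 3 ->
    sum_iota 3 (fun k => g l i k * g m k j) = sum_iota 8 (fun c => fusion l m c * g c i j);
  admissible_trace : forall l, l < 8 -> sum_iota 3 (fun i => g l i i) = T l;
  admissible_trace_sqr : forall l, l < 8 ->
    sum_iota 3 (fun i => sum_iota 3 (fun j => g l i j * g l j i)) = Q l }.

Lemma admissible_entries (Z : 'M[nat]_8) mu (T Q : nat -> nat) (G : 'I_8 -> 'M[nat]_3) :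
  (forall m : 'I_8, Z m m = count_mem (m : nat) mu) ->
  (forall l, l < 8 -> spectral_trace mu 1 l = (T l)%:R) ->
  (forall l, l < 8 -> spectral_trace mu 2 l = (Q l)%:R) ->
  nimrep G -> matches Z G -> admissible T Q (entries G).
Proof.
move=> Z_mu trace_T trace_Q nimG matchG; have [G0 G_sym _] := nimG.
have traceE k l t : l < 8 -> spectral_trace mu k l = t%:R ->
    \tr (toC (G (inord l)) ^+ k) = t%:R.
  move=> lt_l8 trt.
  by rewrite (matches_trace_spectral _ _ Z_mu matchG) inordK // trt rmorph_nat.
split=> [l i j _ _ _ | i j lt_i3 lt_j3 | l m i j lt_l8 lt_m8 _ _ | l lt_l8 | l lt_l8].
- by rewrite /entries [in LHS](G_sym (inord l)) mxE.
- rewrite /entries (_ : inord 0 = p0); last exact/val_inj/inordK.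
  by rewrite G0 mxE -(inj_eq val_inj) /= !inordK.
- rewrite !sum_iotaE /entries.
  under eq_bigr do rewrite inord_val.
  under [RHS]eq_bigr do rewrite inord_val.
  by rewrite nimrep_product // !inordK.
- apply/eqP; rewrite sum_iotaE -(eqr_nat algC) -(traceE _ _ _ lt_l8 (trace_T l lt_l8)).
  rewrite -[toC _ ^+ 1]/(toC (G (inord l))) toC_trace.
  by apply/eqP; congr _%:R; apply: eq_bigr => i _; rewrite /entries inord_val.
- apply/eqP; rewrite sum_iotaE -(eqr_nat algC) -(traceE _ _ _ lt_l8 (trace_Q l lt_l8)).
  rewrite toC_trace_sqr; apply/eqP; congr _%:R; apply: eq_bigr => i _.
  by rewrite sum_iotaE; apply: eq_bigr => j _; rewrite /entries !inord_val.
Qed.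

(* A symmetric 3x3 matrix is stored as its upper triangle [t00; t01; t02; t11; t12; t22]. *)
Definition upper_index (i j : nat) : nat :=
  nth 0 [:: 0; 3; 5] (minn i j) + (maxn i j - minn i j).

Definition sym_entry (t : seq nat) (i j : nat) : nat := nth 0 t (upper_index i j).

Definition upper (g : nat -> nat -> nat -> nat) (l : nat) : seq nat :=
  [:: g l 0 0; g l 0 1; g l 0 2; g l 1 1; g l 1 2; g l 2 2].

Definition unit_upper : seq nat := [:: 1; 0; 0; 1; 0; 1].

Lemma sym_entry_upper T Q g l i j : admissible T Q g -> l < 8 -> i < 3 -> j < 3 ->
  sym_entry (upper g l) i j = g l i j.
Proof.
case=> g_sym _ _ _ _ lt_l8.
by case: i => [|[|[|i]]] // _; case: j => [|[|[|j]]] // _; rewrite /sym_entry //= g_sym.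
Qed.

Lemma upper_unit T Q g : admissible T Q g -> upper g 0 = unit_upper.
Proof. by case=> _ g_unit _ _ _; rewrite /upper !g_unit. Qed.

Definition pentry (a : ptable) (l i j : nat) : nat :=
  if nth None a l is Some t then sym_entry t i j else 0.

Definition defined (a : ptable) (l : nat) : bool := nth None a l != None.

Definition product_ok (a : ptable) (l m : nat) : bool :=
  all (fun i => all (fun j =>
    sum_iota 3 (fun k => pentry a l i k * pentry a m k j)
    == sum_iota 8 (fun c => fusion l m c * pentry a c i j)) (iota 0 3)) (iota 0 3).

Definition fusion_support (l m : nat) : seq nat :=
  l :: m :: [seq c <- iota 0 8 | fusion l m c != 0].

(* The fusion rule for G_l G_m is tested as soon as every matrix it involves is chosen. *)
Definition consistent (a : ptable) : bool :=
  all (fun l => all (fun m => all (defined a) (fusion_support l m) ==> product_ok a l m)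
    (iota 0 8)) (iota 0 8).

Definition traces_ok (T Q : nat -> nat) (l : nat) (t : seq nat) : bool :=
  (sum_iota 3 (fun i => sym_entry t i i) == T l)
  && (sum_iota 3 (fun i => sum_iota 3 (fun j => sym_entry t i j * sym_entry t j i)) == Q l).

Fixpoint tuples_below (b n : nat) : seq (seq nat) :=
  if n is n'.+1 then [seq x :: t | x <- iota 0 b, t <- tuples_below b n'] else [:: [::]].

Definition candidates T Q l : seq (seq nat) := [seq t <- tuples_below 5 6 | traces_ok T Q l t].

Definition extend (a : ptable) (l : nat) (t : seq nat) : ptable := set_nth None a l (Some t).

Definition search_step T Q (S : seq ptable) (l : nat) : seq ptable :=
  [seq a <- [seq extend a l t | a <- S, t <- candidates T Q l] | consistent a].

Definition prefix_table g (k : nat) : ptable :=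
  [seq if l <= k then Some (upper g l) else None | l <- iota 0 8].

Lemma nth_prefix_table g k l : l < 8 ->
  nth None (prefix_table g k) l = if l <= k then Some (upper g l) else None.
Proof. by move=> lt_l8; rewrite (nth_map 0) ?size_iota // nth_iota. Qed.

Lemma pentry_prefix T Q g k l i j : admissible T Q g -> l < 8 -> i < 3 -> j < 3 ->
  l <= k -> pentry (prefix_table g k) l i j = g l i j.
Proof.
move=> adm lt_l8 lt_i3 lt_j3 le_lk.
by rewrite /pentry nth_prefix_table // le_lk (sym_entry_upper adm).
Qed.

Lemma consistent_prefix T Q g k : admissible T Q g -> consistent (prefix_table g k).
Proof.
move=> adm; apply/all_iotaP => l lt_l8; apply/all_iotaP => m lt_m8.
apply/implyP => /allP def_lm; apply/all_iotaP => i lt_i3; apply/all_iotaP => j lt_j3.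
have def_c c : c \in fusion_support l m -> c < 8 -> forall i j, i < 3 -> j < 3 ->
    pentry (prefix_table g k) c i j = g c i j.
  move=> supp_c lt_c8 i' j' lt_i' lt_j'; apply: (pentry_prefix adm) => //.
  by have := def_lm c supp_c; rewrite /defined nth_prefix_table //; case: ifP.
apply/eqP; rewrite (eq_sum_iota (f' := fun r => g l i r * g m r j)) => [|r lt_r3]; last first.
  by rewrite !def_c ?mem_head ?inE ?eqxx ?orbT.
rewrite (admissible_fusion adm) //; apply: eq_sum_iota => c lt_c8.
have [->|nz_lmc] := eqVneq (fusion l m c) 0; first by rewrite !mul0n.
by rewrite def_c // !inE mem_filter nz_lmc mem_iota lt_c8 !orbT.
Qed.

Lemma leq_sum_iota n (f : nat -> nat) i : i < n -> f i <= sum_iota n f.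
Proof.
by move=> lt_in; rewrite sum_iotaE (bigD1 (Ordinal lt_in)) //=; apply: leq_addr.
Qed.

Lemma mem_tuples_below b n t : size t = n -> all (fun x => x < b) t -> t \in tuples_below b n.
Proof.
elim: n t => [|n IHn] [|x t] //= [size_t] /andP[lt_xb lt_tb].
by apply: allpairs_f; rewrite ?mem_iota ?IHn.
Qed.

Lemma admissible_entry_lt T Q g l i j : admissible T Q g -> l < 8 -> i < 3 -> j < 3 ->
  Q l < 25 -> g l i j < 5.
Proof.
move=> adm lt_l8 lt_i3 lt_j3 lt_Q25; rewrite ltnNge; apply/negP => le5g.
have : 25 <= g l i j * g l j i.
  by rewrite [g l j i](admissible_sym adm) //; exact: (leq_mul le5g le5g).
move/leq_trans/(_ (leq_sum_iota (fun j => g l i j * g l j i) lt_j3)).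
move/leq_trans/(_ (leq_sum_iota (fun i => sum_iota 3 (fun j => g l i j * g l j i)) lt_i3)).
by rewrite (admissible_trace_sqr adm) // leqNgt lt_Q25.
Qed.

Lemma upper_candidate T Q g l : admissible T Q g -> l < 8 -> Q l < 25 ->
  upper g l \in candidates T Q l.
Proof.
move=> adm lt_l8 lt_Q25; have sym_l := sym_entry_upper adm lt_l8.
rewrite mem_filter; apply/andP; split; last first.
  by apply: mem_tuples_below => //; rewrite /= !(admissible_entry_lt adm).
rewrite /traces_ok -(admissible_trace adm) // -(admissible_trace_sqr adm) //.
apply/andP; split; apply/eqP; apply: eq_sum_iota => i lt_i3; first exact: sym_l.
by apply: eq_sum_iota => j lt_j3; rewrite !sym_l.
Qed.

Definition unit_ptable : ptable := Some unit_upper :: nseq 7 None.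

Lemma prefix_table0 T Q g : admissible T Q g -> prefix_table g 0 = unit_ptable.
Proof. by move=> adm; rewrite /prefix_table /= (upper_unit adm). Qed.

Lemma prefix_table_succ g k : k < 7 ->
  prefix_table g k.+1 = extend (prefix_table g k) k.+1 (upper g k.+1).
Proof.
move=> lt_k7; apply: (@eq_from_nth _ None) => [|l].
  by rewrite size_set_nth !size_map size_iota; apply/esym/maxn_idPr.
rewrite size_map size_iota => lt_l8; rewrite nth_set_nth /= !nth_prefix_table //.
by case: eqP => [->|/eqP ne_lk]; rewrite ?leqnn // leq_eqVlt ltnS (negbTE ne_lk).
Qed.

Definition search_upto T Q (k : nat) : seq ptable :=
  foldl (search_step T Q) [:: unit_ptable] (iota 1 k).

Lemma prefix_in_search T Q g k : admissible T Q g -> (forall l, l < 8 -> Q l < 25) ->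
  k <= 7 -> prefix_table g k \in search_upto T Q k.
Proof.
move=> adm lt_Q25; elim: k => [|k IHk] lt_k8; first by rewrite (prefix_table0 adm) mem_head.
rewrite /search_upto -addn1 iotaD foldl_cat addn1 /= mem_filter (consistent_prefix _ adm) /=.
rewrite (prefix_table_succ _ lt_k8); apply: allpairs_f; first exact/IHk/ltnW.
by apply: upper_candidate => //; apply: lt_Q25.
Qed.

Definition perm_related (a a' : ptable) (p : seq nat) : bool :=
  all (fun l => all (fun i => all (fun j =>
    pentry a' l i j == pentry a l (nth 0 p i) (nth 0 p j)) (iota 0 3)) (iota 0 3)) (iota 0 8).

Definition pairwise_equivalent (S : seq ptable) : bool :=
  all (fun a => all (fun a' => has (perm_related a a') (permutations (iota 0 3))) S) S.

Lemma perm_of_seq n (p : seq nat) : perm_eq p (iota 0 n.+1) ->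
  exists s : 'S_n.+1, forall i, s i = nth 0 p i :> nat.
Proof.
move=> perm_p; have size_p : size p = n.+1 by rewrite (perm_size perm_p) size_iota.
have lt_p i : i < n.+1 -> nth 0 p i < n.+1.
  by move=> lt_i; rewrite -[_ < _](mem_iota 0) -(perm_mem perm_p) mem_nth ?size_p.
have inj_p : injective (fun i : 'I_n.+1 => inord (nth 0 p i) : 'I_n.+1).
  move=> i j /(congr1 val); rewrite /= !inordK ?lt_p //= => /eqP.
  by rewrite nth_uniq ?size_p ?(perm_uniq perm_p) ?iota_uniq // => /eqP/val_inj.
by exists (perm inj_p) => i; rewrite permE inordK ?lt_p.
Qed.

Lemma nimrep_equiv_of_related T Q (G G' : 'I_8 -> 'M[nat]_3) p :
  admissible T Q (entries G) -> admissible T Q (entries G') ->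
  p \in permutations (iota 0 3) ->
  perm_related (prefix_table (entries G) 7) (prefix_table (entries G') 7) p ->
  nimrep_equiv G G'.
Proof.
move=> adm adm'; rewrite mem_permutations => /perm_of_seq[s s_p] rel.
exists s => l; apply/matrixP => i j; rewrite !mxE.
have /eqP := all_iota_ord j (all_iota_ord i (all_iota_ord l rel)).
rewrite (pentry_prefix adm') -?s_p ?(pentry_prefix adm) ?leq_ord //.
by rewrite /entries !inord_val.
Qed.

Definition table_nimrep (a : ptable) : 'I_8 -> 'M[nat]_3 :=
  fun l => \matrix_(i, j) pentry a l i j.

Lemma nimrep_table (a : ptable) : nth None a 0 = Some unit_upper ->
  all (defined a) (iota 0 8) -> consistent a -> nimrep (table_nimrep a).
Proof.
move=> a0 def_a cons_a; split=> [|l|l m].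
- by apply/matrixP => -[[|[|[|i]]] lt_i] [[|[|[|j]]] lt_j]; rewrite !mxE /pentry a0.
- apply/matrixP => i j; rewrite !mxE /pentry /sym_entry /upper_index.
  by rewrite minnC maxnC.
- apply/matrixP => i j; rewrite !mxE summxE.
  have prod_lm : product_ok a l m.
    apply: (implyP (all_iota_ord m (all_iota_ord l cons_a))).
    apply/allP => c; rewrite !inE mem_filter => /or3P[/eqP->|/eqP->|/andP[_]].
    + exact: all_iota_ord l def_a.
    + exact: all_iota_ord m def_a.
    + exact: (allP def_a).
  have /eqP := all_iota_ord j (all_iota_ord i prod_lm).
  rewrite !sum_iotaE => prod_ij.
  transitivity ((\sum_(k < 3) pentry a l i k * pentry a m k j)%:R : algC).
    by rewrite natr_sum; apply: eq_bigr => k _; rewrite !mxE natrM.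
  by rewrite prod_ij natr_sum; apply: eq_bigr => c _; rewrite !mxE Nfus_fusion natrM.
Qed.

Lemma card_inord_nth (mu : seq nat) (m : 'I_8) : size mu = 3 -> all (fun x => x < 8) mu ->
  #|[pred i : 'I_3 | inord (nth 0 mu i) == m]| = count_mem (m : nat) mu.
Proof.
move=> size_mu lt_mu.
rewrite -sum1_card -[in RHS](mkseq_nth 0 mu) size_mu -sum1_count.
rewrite /mkseq big_map -[iota 0 3]/(index_iota 0 3) big_mkord; apply: eq_bigl => i.
by rewrite !inE -(inj_eq val_inj) /= inordK //; apply: (allP lt_mu); rewrite mem_nth ?size_mu.
Qed.
End Tables.

Lemma sum_count_mem n (s : seq nat) : all (fun x => x < n)%N s ->
  (\sum_(m < n) count_mem (m : nat) s)%N = size s.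
Proof.
elim: s => [|x s IHs] /=; first by rewrite big1.
case/andP=> lt_xn /IHs <-; rewrite big_split /= (bigD1 (Ordinal lt_xn)) //= eqxx.
rewrite big1 // => m; rewrite eq_sym -(inj_eq val_inj) /=.
by move/negbTE->.
Qed.

Lemma mxtr8_count (Z : 'M[nat]_8) mu : (forall m : 'I_8, Z m m = count_mem (m : nat) mu) ->
  all (fun m => m < 8)%N mu -> mxtr8 Z = size mu.
Proof. by move=> Z_mu lt_mu; rewrite /mxtr8 (eq_bigr _ (fun m _ => Z_mu m)) sum_count_mem. Qed.

Definition Vrat (V : seq (seq int)) (i j : nat) : rat := (nth 0%Z (nth [::] V i) j)%:~R.

Definition col_norm V (j : nat) : rat := sum_iota 3 (fun i => Vrat V i j ^+ 2).

Definition orthonormal_ok (V : seq (seq int)) : bool :=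
  all (fun k => 0 < col_norm V k) (iota 0 3) &&
  all (fun i => all (fun j =>
    sum_iota 3 (fun k => Vrat V i k * Vrat V j k / col_norm V k) == (i == j)%:R)
  (iota 0 3)) (iota 0 3).

Definition diagonalises (a : ptable) V (mu : seq nat) : bool :=
  all (fun l => all (fun i => all (fun j =>
    sum_iota 3 (fun b => sum_iota 3 (fun c => Vrat V c i * (pentry a l c b)%:R * Vrat V b j))
    == (i == j)%:R * psirat l (nth 0 mu i) * col_norm V i)
  (iota 0 3)) (iota 0 3)) (iota 0 8).

Definition unitary_of V : 'M[algC]_3 :=
  \matrix_(i, j) (ratr (Vrat V i j) / sqrtC (ratr (col_norm V j))).

Lemma conj_unitary_of V : orthonormal_ok V -> map_mx Num.conj (unitary_of V) = unitary_of V.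
Proof.
case/andP=> /all_iotaP pos_V _; apply/matrixP => i j.
rewrite !mxE rmorphM fmorphV /= conj_Crat ?Crat_rat // geC0_conj // sqrtC_ge0 ler0q ltW //.
exact: pos_V.
Qed.

Lemma unitary_of_mul V i j k :
  unitary_of V i k * unitary_of V j k = ratr (Vrat V i k * Vrat V j k / col_norm V k).
Proof.
by rewrite !mxE mulrACA -invfM -expr2 sqrtCK !(rmorphM, fmorphV).
Qed.

Lemma unitary_of_entry V (a : ptable) l (i j : 'I_3) :
  ((unitary_of V)^T *m toC (table_nimrep a l) *m unitary_of V) i j =
  ratr (sum_iota 3 (fun b => sum_iota 3 (fun c =>
    Vrat V c i * (pentry a l c b)%:R * Vrat V b j)))
  / (sqrtC (ratr (col_norm V i)) * sqrtC (ratr (col_norm V j))).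
Proof.
rewrite mxE sum_iotaE rmorph_sum mulr_suml; apply: eq_bigr => b _.
rewrite mxE sum_iotaE rmorph_sum !mulr_suml; apply: eq_bigr => c _.
rewrite !mxE !rmorphM rmorph_nat invfM.
ring.
Qed.

Lemma matches_table (Z : 'M[nat]_8) mu V a :
  (forall m : 'I_8, Z m m = count_mem (m : nat) mu) ->
  size mu = 3%N -> all (fun m => m < 8)%N mu ->
  orthonormal_ok V -> diagonalises a V mu -> matches Z (table_nimrep a).
Proof.
move=> Z_mu size_mu lt_mu orthoV diagV; split.
  by rewrite (mxtr8_count Z_mu).
exists (fun i => inord (nth 0 mu i)), (unitary_of V); rewrite (conj_unitary_of orthoV).
have [/all_iotaP pos_V unit_V] := andP orthoV.
split=> [m | | l]; first by rewrite Z_mu card_inord_nth.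
  apply/matrixP => i j; rewrite !mxE -(inj_eq val_inj) -(rmorph_nat (ratr : rat -> algC)).
  rewrite -(eqP (all_iota_ord j (all_iota_ord i unit_V))).
  by rewrite sum_iotaE rmorph_sum; apply: eq_bigr => k _; rewrite [_^T _ _]mxE unitary_of_mul.
apply/matrixP => i j.
rewrite unitary_of_entry (eqP (all_iota_ord j (all_iota_ord i (all_iota_ord l diagV)))).
rewrite [diag_mx _ _ _]mxE [_ 0 i]mxE -(inj_eq val_inj) /=.
have [<-|_] := eqVneq (i : nat) j; last by rewrite !mul0r rmorph0 mul0r.
rewrite /= mulr1n mul1r -expr2 sqrtCK rmorphM mulfK.
  by rewrite -/(psi _ _) psi_rat inordK // (allP lt_mu) // mem_nth ?size_mu.
by rewrite fmorph_eq0 lt0r_neq0 ?pos_V.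
Qed.

Definition nat_of_rat (x : rat) : nat := `|numq x|%N.

Definition realises (mu : seq nat) V (a : ptable) : bool :=
  [&& nth None a 0 == Some unit_upper, all (defined a) (iota 0 8), consistent a
    & diagonalises a V mu].

(* T and Q are the traces of G_l and G_l^2 fixed by the spectrum Exp(Z) = mu; [certified]
   also checks that these traces are indeed natural numbers. *)
Definition certified (mu : seq nat) (V : seq (seq int)) : bool :=
  let T := nth 0%N [seq nat_of_rat (spectral_trace mu 1 l) | l <- iota 0 8] in
  let Q := nth 0%N [seq nat_of_rat (spectral_trace mu 2 l) | l <- iota 0 8] in
  let S := search_upto T Q 7 in
  [&& size mu == 3%N, all (fun m => m < 8)%N mu,
      all (fun l => [&& spectral_trace mu 1 l == (T l)%:R,
                        spectral_trace mu 2 l == (Q l)%:R & Q l < 25]%N) (iota 0 8),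
      orthonormal_ok V, pairwise_equivalent S & has (realises mu V) S].

Lemma unique_matching_of_certified (Z : 'M[nat]_8) mu V :
  certified mu V -> (forall m : 'I_8, Z m m = count_mem (m : nat) mu) ->
  unique_matching_nimrep Z.
Proof.
rewrite /certified => + Z_mu.
set T := nth 0%N _; set Q := nth 0%N _; set S := search_upto T Q 7.
case/and5P=> /eqP size_mu lt_mu /all_iotaP traces orthoV /andP[equivS].
case/hasP=> a Sa /and4P[/eqP a0 def_a cons_a diag_a].
have adm G : nimrep G -> matches Z G -> admissible T Q (entries G).
  apply: admissible_entries Z_mu _ _ => l /traces/and3P[/eqP ? /eqP ? _] //.
have lt_Q25 l : (l < 8)%N -> (Q l < 25)%N by move/traces/and3P=> [].
have in_S G : nimrep G -> matches Z G -> prefix_table (entries G) 7 \in S.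
  by move=> nimG matchG; apply: prefix_in_search (adm _ nimG matchG) lt_Q25 _.
split.
  exists 3%N, (table_nimrep a); split; first exact: nimrep_table.
  exact: matches_table Z_mu size_mu lt_mu orthoV diag_a.
move=> n G G' nimG matchG nimG' matchG'.
have n3 : n = 3%N by case: matchG => + _ => ->; rewrite (mxtr8_count Z_mu).
subst n; have /allP/(_ _ (in_S _ nimG matchG))/allP/(_ _ (in_S _ nimG' matchG')) := equivS.
by case/hasP=> p; apply: nimrep_equiv_of_related; apply: adm.
Qed.

(* Their columns are common eigenvectors of the G_l, orthogonal but not normalised. *)
Definition V_A : seq (seq int) := [:: [:: 1; 1; 1]; [:: 1; -1; 1]; [:: 1; 0; -2]]%Z.
Definition V_B : seq (seq int) := [:: [:: 2; 1; 0]; [:: 1; -1; 1]; [:: 1; -1; -1]]%Z.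

Lemma certified_022 : certified [:: 0; 2; 2]%N V_A. Proof. by vm_compute. Qed.
Lemma certified_033 : certified [:: 0; 3; 3]%N V_A. Proof. by vm_compute. Qed.
Lemma certified_026 : certified [:: 0; 2; 6]%N V_B. Proof. by vm_compute. Qed.
Lemma certified_037 : certified [:: 0; 3; 7]%N V_B. Proof. by vm_compute. Qed.
Lemma certified_027 : certified [:: 0; 2; 7]%N V_B. Proof. by vm_compute. Qed.

Ltac diagonal_of_Z := by case=> -[|[|[|[|[|[|[|[|m]]]]]]]] lt_m8 //; rewrite !mxE.

Theorem proposition6p5 :
  forall Z : 'M[nat]_8,
    Z \in [:: Z24; Z42; Z35; Z53; Z44; Zp55; Zp44] ->
    unique_matching_nimrep Z.
Proof.
move=> Z; rewrite !inE.
case/orP=> [/eqP->|/orP[/eqP->|/orP[/eqP->|/orP[/eqP->|/orP[/eqP->|/orP[/eqP->|/eqP->]]]]]].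
- by apply: (unique_matching_of_certified certified_022); diagonal_of_Z.
- by apply: (unique_matching_of_certified certified_022); diagonal_of_Z.
- by apply: (unique_matching_of_certified certified_033); diagonal_of_Z.
- by apply: (unique_matching_of_certified certified_033); diagonal_of_Z.
- by apply: (unique_matching_of_certified certified_026); diagonal_of_Z.
- by apply: (unique_matching_of_certified certified_037); diagonal_of_Z.
- by apply: (unique_matching_of_certified certified_027); diagonal_of_Z.
Qed.
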